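(* (1) $\varepsilon^{cop}=\varepsilon$; (2) $S(A)\subseteq A$, $S^{cop}(A)\subseteq A$ and $S^{cop}=S^{-1}$.
   Context: Let $(A,\Delta)$ be a generalized multiplier Hopf coquasigroup: $A$ an associative algebra over a field $k$ with non-degenerate product, $\Delta:A\to M(A\otimes A)$ an algebra homomorphism (not necessarily coassociative) with Galois maps $T_{1}(a\otimes b)=\Delta(a)(1\otimes b)$, $T_{2}(a\otimes b)=(a\otimes 1)\Delta(b)$ in $A\otimes A$, $\varepsilon:A\to k$ linear with $(\varepsilon\otimes\iota)T_{1}(a\otimes b)=ab=(\iota\otimes\varepsilon)T_{2}(a\otimes b)$, $T_{1},T_{2}$ bijective, $T_{1}^{-1}=(\iota\otimes\varepsilon\otimes\iota)(\iota\otimes T_{1}^{-1})(\Delta\otimes\iota)$ and $T_{2}^{-1}=(\iota\otimes\varepsilon\otimes\iota)(T_{2}^{-1}\otimes\iota)(\iota\otimes\Delta)$; its antipode $S:A\to M(A)$ is defined by $S(a)b=(\varepsilon\otimes\iota)T_{1}^{-1}(a\otimes b)$. Assume $(A,\Delta)$ is regular, i.e. $(A,\Delta^{cop})$ (with $\Delta^{cop}$ the flipped comultiplication) is again a generalized multiplier Hopf coquasigroup, and let $\varepsilon^{cop}$ and $S^{cop}$ be its associated counit and antipode. *)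

(* A is a possibly non-unital algebra: a k-vector space with a bilinear
   associative multiplication mulA.  Tensor products are given by their
   universal property (any model is isomorphic to any other). *)
From HB Require Import structures.
From mathcomp Require Import all_boot all_algebra.
From Stdlib Require Import ClassicalEpsilon.
Set Implicit Arguments. Unset Strict Implicit. Unset Printing Implicit Defensive.
Import GRing.Theory.
Local Open Scope ring_scope.

Definition lin {k : fieldType} {U V : lmodType k} (f : U -> V) : Prop :=
  forall (a : k) x y, f (a *: x + y) = a *: f x + f y.

Definition bilin {k : fieldType} {U V W : lmodType k} (f : U -> V -> W) : Prop :=
  (forall v, lin (fun u => f u v)) /\ (forall u, lin (f u)).

Record tensor_product (k : fieldType) (U V : lmodType k) := TensorProduct {
  tp_space :> lmodType k;
  tp : U -> V -> tp_space;
  tp_bilin : bilin tp;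
  tp_universal : forall (W : lmodType k) (f : U -> V -> W), bilin f ->
    exists! g : tp_space -> W, lin g /\ forall u v, g (tp u v) = f u v }.

Definition tlift {k : fieldType} {U V : lmodType k} (T : tensor_product U V)
  {W : lmodType k} (f : U -> V -> W) : T -> W :=
  epsilon (inhabits (fun _ => 0))
    (fun g : T -> W => lin g /\ forall u v, g (tp T u v) = f u v).
Arguments tlift {k U V} T {W} f _.
Arguments tp {k U V} t _ _.

Section Ops.
Variables (k : fieldType) (A : lmodType k) (mulA : A -> A -> A)
  (A2 : tensor_product A A) (A3 : tensor_product A A2).
Local Notation t2 := (tp A2).
Local Notation t3 := (tp A3).

Definition mul2 (x y : A2) : A2 :=
  tlift A2 (fun a b => tlift A2 (fun c d => t2 (mulA a c) (mulA b d)) y) x.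
(* (c (x) 1) y *)
Definition lmulL (c : A) (y : A2) : A2 := tlift A2 (fun u v => t2 (mulA c u) v) y.
(* x (c (x) 1) *)
Definition rmulL (x : A2) (c : A) : A2 := tlift A2 (fun u v => t2 (mulA u c) v) x.
(* (1 (x) c) y *)
Definition lmulR (c : A) (y : A2) : A2 := tlift A2 (fun u v => t2 u (mulA c v)) y.
(* x (1 (x) c) *)
Definition rmulR (x : A2) (c : A) : A2 := tlift A2 (fun u v => t2 u (mulA v c)) x.
Definition eps_id (eps : A -> k) (x : A2) : A := tlift A2 (fun u v => eps u *: v) x.
Definition id_eps (eps : A -> k) (x : A2) : A := tlift A2 (fun u v => eps v *: u) x.
Definition flip2 (x : A2) : A2 := tlift A2 (fun u v => t2 v u) x.
Definition tens_r (x : A2) (c : A) : A3 := tlift A2 (fun u v => t3 u (t2 v c)) x.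
Definition id_eps_id (eps : A -> k) (z : A3) : A2 :=
  tlift A3 (fun u y => t2 u (eps_id eps y)) z.
Definition id_tens (F : A2 -> A2) (z : A3) : A3 := tlift A3 (fun u y => t3 u (F y)) z.
Definition tens_id (F : A2 -> A2) (z : A3) : A3 :=
  tlift A3 (fun u y => tlift A2 (fun v c => tens_r (F (t2 u v)) c) y) z.

Definition nd_algebra : Prop :=
  bilin mulA /\ (forall a b c, mulA (mulA a b) c = mulA a (mulA b c)) /\
  (forall a, (forall b, mulA a b = 0) -> a = 0) /\
  (forall a, (forall b, mulA b a = 0) -> a = 0).

(* Delta(a) in M(A(x)A)
   is given by its left action DL a and right action DR a on A (x) A. *)
Definition is_GMHC (DL DR : A -> A2 -> A2) (eps : A -> k)
  (T1 T2 T1inv T2inv : A2 -> A2) : Prop :=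
  (* Delta(a) is a multiplier of A (x) A *)
  (forall a x y, mul2 x (DL a y) = mul2 (DR a x) y) /\
  (forall (al : k) a b y, DL (al *: a + b) y = al *: DL a y + DL b y) /\
  (forall (al : k) a b y, DR (al *: a + b) y = al *: DR a y + DR b y) /\
  (forall a b y, DL (mulA a b) y = DL a (DL b y)) /\
  (forall a b y, DR (mulA a b) y = DR b (DR a y)) /\
  (* T1 (a (x) b) = Delta(a)(1 (x) b) in A (x) A *)
  lin T1 /\
  (forall a b x, mul2 (T1 (t2 a b)) x = DL a (lmulR b x) /\
                 mul2 x (T1 (t2 a b)) = rmulR (DR a x) b) /\
  (* T2 (a (x) b) = (a (x) 1) Delta(b) in A (x) A *)
  lin T2 /\
  (forall a b x, mul2 (T2 (t2 a b)) x = lmulL a (DL b x) /\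
                 mul2 x (T2 (t2 a b)) = DR b (rmulL x a)) /\
  (forall (al : k) x y, eps (al *: x + y) = al * eps x + eps y) /\
  (forall a b, eps_id eps (T1 (t2 a b)) = mulA a b) /\
  (forall a b, id_eps eps (T2 (t2 a b)) = mulA a b) /\
  cancel T1 T1inv /\ cancel T1inv T1 /\ cancel T2 T2inv /\ cancel T2inv T2 /\
  (* T1^-1 = (i (x) eps (x) i)(i (x) T1^-1)(Delta (x) i), covered on the left
     of the first leg by c (x) 1 (note (c (x) 1) Delta(a) = T2 (c (x) a)) *)
  (forall a b c, lmulL c (T1inv (t2 a b)) =
                 id_eps_id eps (id_tens T1inv (tens_r (T2 (t2 c a)) b))) /\
  (* T2^-1 = (i (x) eps (x) i)(T2^-1 (x) i)(i (x) Delta), covered on the right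
     of the last leg by 1 (x) c (note Delta(b)(1 (x) c) = T1 (b (x) c)) *)
  (forall a b c, rmulR (T2inv (t2 a b)) c =
                 id_eps_id eps (tens_id T2inv (tp A3 a (T1 (t2 b c))))).

End Ops.

(* S(a)b := (eps (x) iota) T1^-1 (a (x) b) always lies in A; the point is that S(a) itself
   does.  Identities in A (x) A are proved by multiplying them by an arbitrary element,
   which is legitimate because A (x) A is non-degenerate when A is (this needs linear
   functionals on A, obtained from Zorn's lemma).  In this way T1((u (x) 1)Y) = Delta(u)T1(Y)
   and Delta(q)(a (x) b) = sigma(T1^cop(q (x) a))(1 (x) b), where sigma is the flip.  The
   first gives that eps is multiplicative and S anti-multiplicative; the second that
   S(a) = (eps (x) iota) T1^-1 sigma T1^cop(q (x) a) for any q with eps(q) = 1.  Comparing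
   eps (x) iota and eps^cop (x) iota on the image of T1^cop gives eps^cop = eps.  Finally
   S(S^cop(v) u) = S(u) v, so S(u) S(S^cop v) = S(u) v, and the elements
   c S(u) = (iota (x) eps) T2^-1 (c (x) u) span A, whence S (S^cop v) = v; exchanging the
   roles of Delta and Delta^cop gives S^cop (S a) = a. *)

From HB Require Import structures.
From mathcomp Require Import all_boot all_algebra.
From mathcomp Require Import boolp classical_sets.
From Stdlib Require Import ClassicalEpsilon.
Set Implicit Arguments. Unset Strict Implicit. Unset Printing Implicit Defensive.
Import GRing.Theory.
Local Open Scope ring_scope.

Section LinearMaps.
Variables (k : fieldType) (U V : lmodType k).

Section LinearFacts.
Variables (f : U -> V) (f_lin : lin f).
Let F : {linear U -> V} := HB.pack f (GRing.isLinear.Build k U V *:%R f f_lin).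

Lemma lin0 : f 0 = 0. Proof. exact: (linear0 F). Qed.
Lemma linD : {morph f : x y / x + y}. Proof. exact: (linearD F). Qed.
Lemma linB : {morph f : x y / x - y}. Proof. exact: (linearB F). Qed.
Lemma linZ a : {morph f : x / a *: x}. Proof. exact: (linearZZ F). Qed.
Lemma lin_sum I (r : seq I) (G : I -> U) :
  f (\sum_(i <- r) G i) = \sum_(i <- r) f (G i).
Proof. exact: (linear_sum F). Qed.

End LinearFacts.

Lemma lin_add (f g : U -> V) : lin f -> lin g -> lin (fun x => f x + g x).
Proof. by move=> Hf Hg a x y; rewrite Hf Hg scalerDr addrACA. Qed.

Lemma lin_scale (f : U -> V) c : lin f -> lin (fun x => c *: f x).
Proof. by move=> Hf a x y; rewrite Hf scalerDr !scalerA mulrC. Qed.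

Lemma lin_cancel (f g : U -> U) : lin f -> cancel f g -> cancel g f -> lin g.
Proof. by move=> Hf fK gK a x y; rewrite -{1}(gK x) -{1}(gK y) -Hf fK. Qed.

End LinearMaps.

Definition scalar_pack (k : fieldType) (U : lmodType k) (f : U -> k) (f_scalar : scalar f) :
  {scalar U} := HB.pack_for {scalar U} f (GRing.isLinear.Build k U k^o *%R f f_scalar).

Section ScalarFacts.
Variables (k : fieldType) (U : lmodType k) (f : U -> k) (f_scalar : scalar f).

Lemma scalar0 : f 0 = 0. Proof. exact: (linear0 (scalar_pack f_scalar)). Qed.
Lemma scalarZl a x : f (a *: x) = a * f x. Proof. exact: (scalarZ (scalar_pack f_scalar)). Qed.

End ScalarFacts.

Lemma eq0_no_nonzero (V : zmodType) (a : V) : ~ (exists b : V, b != 0) -> a = 0.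
Proof. by move=> no_nonzero; apply: contrapT => /eqP a_neq0; apply: no_nonzero; exists a. Qed.

Section TensorProduct.
Variables (k : fieldType) (U V : lmodType k) (T : tensor_product U V).

Lemma tlift_spec (W : lmodType k) (f : U -> V -> W) : bilin f ->
  lin (tlift T f) /\ forall u v, tlift T f (tp T u v) = f u v.
Proof.
move=> f_bilin; have [g [g_spec _]] := tp_universal T f_bilin.
by apply: (epsilon_spec (inhabits (fun _ => 0))
  (fun g : T -> W => lin g /\ forall u v, g (tp T u v) = f u v)); exists g.
Qed.

Lemma tlift_lin (W : lmodType k) (f : U -> V -> W) : bilin f -> lin (tlift T f).
Proof. by case/tlift_spec. Qed.

Lemma tlift_tp (W : lmodType k) (f : U -> V -> W) : bilin f ->
  forall u v, tlift T f (tp T u v) = f u v.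
Proof. by case/tlift_spec. Qed.

Lemma tpDl x y v : tp T (x + y) v = tp T x v + tp T y v.
Proof. exact: (linD ((tp_bilin T).1 v)). Qed.
Lemma tpZl a x v : tp T (a *: x) v = a *: tp T x v.
Proof. exact: (linZ ((tp_bilin T).1 v)). Qed.
Lemma tpPl a x y v : tp T (a *: x + y) v = a *: tp T x v + tp T y v.
Proof. exact: ((tp_bilin T).1 v). Qed.
Lemma tp0l v : tp T 0 v = 0.
Proof. exact: (lin0 ((tp_bilin T).1 v)). Qed.
Lemma tp_suml I (r : seq I) (F : I -> U) v :
  tp T (\sum_(i <- r) F i) v = \sum_(i <- r) tp T (F i) v.
Proof. exact: (lin_sum ((tp_bilin T).1 v)). Qed.
Lemma tpZr a u x : tp T u (a *: x) = a *: tp T u x.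
Proof. exact: (linZ ((tp_bilin T).2 u)). Qed.
Lemma tpBr u x y : tp T u (x - y) = tp T u x - tp T u y.
Proof. exact: (linB ((tp_bilin T).2 u)). Qed.
Lemma tpPr a u x y : tp T u (a *: x + y) = a *: tp T u x + tp T u y.
Proof. exact: ((tp_bilin T).2 u). Qed.
Lemma tp0r u : tp T u 0 = 0.
Proof. exact: (lin0 ((tp_bilin T).2 u)). Qed.

Lemma tp_ext (W : lmodType k) (g h : T -> W) : lin g -> lin h ->
  (forall u v, g (tp T u v) = h (tp T u v)) -> g =1 h.
Proof.
move=> g_lin h_lin gh z.
have gtp_bilin : bilin (fun u v => g (tp T u v)).
  by split=> [v|u] a x y; rewrite ?tpPl ?tpPr g_lin.
have [g0 [_ lift_unique]] := tp_universal T gtp_bilin.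
have <- := lift_unique g (conj g_lin (fun _ _ => erefl)).
by have <- := lift_unique h (conj h_lin (fun u v => esym (gh u v))).
Qed.

End TensorProduct.

Section SeparatingFunctional.
Local Open Scope classical_set_scope.
Variables (k : fieldType) (V : lmodType k).

Definition subspace (W : set V) := W 0 /\ forall a x y, W x -> W y -> W (a *: x + y).

Definition linear_graph (G : set (V * k)) :=
  (forall x a b, G (x, a) -> G (x, b) -> a = b) /\
  (forall c x y a b, G (x, a) -> G (y, b) -> G (c *: x + y, c * a + b)).

Lemma eq_shift_solve (w w' v : V) l l' : l != l' ->
  w + l *: v = w' + l' *: v -> v = (l - l')^-1 *: (w' - w).
Proof.
rewrite -subr_eq0 => dl E; apply: (scalerI dl).
by rewrite scalerA divff // scale1r scalerBl -[l *: v](addKr w) E addrA addrK addrC.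
Qed.

Lemma linear_graphB G x y a b : linear_graph G ->
  G (x, a) -> G (y, b) -> G (x - y, a - b).
Proof.
by case=> _ G_lin Gx Gy; have := G_lin (-1) y x b a Gy Gx; rewrite scaleN1r mulN1r !(addrC (- _)).
Qed.

Lemma linear_graphZ G c x a : linear_graph G -> G (0, 0) ->
  G (x, a) -> G (c *: x, c * a).
Proof. by case=> _ G_lin G0 Gx; have := G_lin c x 0 a 0 Gx G0; rewrite !addr0. Qed.

Lemma linear_graph_directed (G : set (V * k)) (Fam : set (set (V * k))) :
  (forall Y, Fam Y -> linear_graph Y /\ Y `<=` G) ->
  (forall p q, G p -> G q -> exists2 Y, Fam Y & Y p /\ Y q) -> linear_graph G.
Proof.
move=> Fam_graph pair_in; split=> [x a b Ga Gb|c x y a b Gx Gy].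
  by have [Y /Fam_graph [[Y_fun _] _] [Ya Yb]] := pair_in _ _ Ga Gb; exact: Y_fun Ya Yb.
have [Y /Fam_graph [[_ Y_lin] YG] [Yx Yy]] := pair_in _ _ Gx Gy.
exact/YG/Y_lin.
Qed.

Lemma linear_graph_extend G u : linear_graph G -> G (0, 0) -> (forall a, ~ G (u, a)) ->
  linear_graph (fun '(y, a) => exists x l, G (x, a) /\ y = x + l *: u).
Proof.
move=> G_graph G0 u_out; have [G_fun G_lin] := G_graph; split.
  move=> x a b [x1 [l1 [Ga ->]]] [x2 [l2 [Gb E]]].
  have [El|dl] := eqVneq l1 l2.
    by move: E Gb; rewrite El => /addIr <-; exact: G_fun.
  case: (u_out ((l1 - l2)^-1 * (b - a))).
  by rewrite (eq_shift_solve dl E); apply: linear_graphZ => //; apply: linear_graphB.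
move=> c x y a b [x1 [l1 [Ga ->]]] [x2 [l2 [Gb ->]]].
exists (c *: x1 + x2), (c * l1 + l2); split; first exact: G_lin.
by rewrite scalerDr scalerDl scalerA addrACA.
Qed.

Lemma separating_functional (W : set V) v : subspace W -> ~ W v ->
  exists f : {scalar V}, f v = 1 /\ forall w, W w -> f w = 0.
Proof.
move=> [W0 W_lin] Wv.
pose G0 : set (V * k) := fun '(x, a) => exists2 w, W w & x = w + a *: v.
have G0_graph : linear_graph G0.
  split=> [x a b [w Ww ->] [w' Ww' E]|c x y a b [w Ww ->] [w' Ww' ->]].
    apply/eqP/negPn/negP => dab; apply: Wv; rewrite (eq_shift_solve dab E).
    by rewrite -[_ *: _]addr0; apply: (W_lin) => //; rewrite -scaleN1r addrC; apply: (W_lin).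
  by exists (c *: w + w') => /=; [apply: (W_lin) | rewrite scalerDr scalerDl scalerA addrACA].
pose P (G : set (V * k)) := linear_graph (G `|` G0).
have [M [PM M_max]] : exists M, P M /\ forall B, M `<` B -> ~ P B.
  apply: Zorn_bigcup => F FP F_chain.
  apply: (linear_graph_directed (Fam := fun Y => Y = G0 \/ exists2 X, F X & Y = X `|` G0)).
    move=> _ [->|[X FX ->]]; first by split=> // p; right.
    by split=> [|p [Xp|G0p]]; [exact: FP | left; exists X | right].
  move=> p q [[X FX Xp]|G0p] [[Y FY Yq]|G0q]; last by exists G0; [left|].
  - have [XY|YX] := F_chain X Y FX FY.
      by exists (Y `|` G0); [right; exists Y | split; left; [apply: XY|]].
    by exists (X `|` G0); [right; exists X | split; left; [|apply: YX]].
  - by exists (X `|` G0); [right; exists X | split; [left|right]].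
  - by exists (Y `|` G0); [right; exists Y | split; [right|left]].
pose H := M `|` G0.
have H00 : H (0, 0) by right; exists 0; rewrite ?scale0r ?addr0.
have H_total u : exists a, H (u, a).
  apply: contrapT => u_out.
  have u_out' a : ~ H (u, a) by move=> Hua; apply: u_out; exists a.
  pose H' : set (V * k) := fun '(y, a) => exists x l, H (x, a) /\ y = x + l *: u.
  have HH' : H `<=` H' by case=> x a Hxa; exists x, 0; rewrite scale0r addr0.
  apply: (M_max H').
    split=> [p Mp|H'M]; first by apply: HH'; left.
    by apply: (u_out' 0); left; apply: H'M; exists 0, 1; rewrite scale1r add0r.
  rewrite /P setUidl; first exact: linear_graph_extend.
  by move=> p G0p; apply: HH'; right.
have /choice [f Hf] := H_total.
have [H_fun H_lin] : linear_graph H := PM.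
have f_lin : scalar f by move=> a x y; apply: (H_fun (a *: x + y)); last apply: H_lin.
exists (scalar_pack f_lin); split=> [|w Ww] /=.
  by apply: (H_fun v); last by right; exists 0; rewrite ?add0r ?scale1r.
by apply: (H_fun w); last by right; exists w; rewrite ?scale0r ?addr0.
Qed.

End SeparatingFunctional.

Section TensorSlices.
Variables (k : fieldType) (U V : lmodType k) (T : tensor_product U V).

Lemma tp_span (z : T) : exists s : seq (U * V), z = \sum_(p <- s) tp T p.1 p.2.
Proof.
apply: contrapT => z_out.
have span_sub : subspace (fun z : T => exists s : seq (U * V), z = \sum_(p <- s) tp T p.1 p.2).
  split=> [|a _ _ [s ->] [s' ->]]; first by exists [::]; rewrite big_nil.
  exists ([seq (a *: p.1, p.2) | p <- s] ++ s'); rewrite big_cat big_map scaler_sumr.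
  by congr (_ + _); apply: eq_bigr => p _; rewrite tpZl.
have [f [fz f0]] := separating_functional span_sub z_out.
have f_lin : lin (f : T -> k^o) := linearP f.
have zero_lin : lin (fun _ : T => 0 : k^o) by move=> a x y; rewrite scaler0 addr0.
have f_pure u v : f (tp T u v) = 0 by apply: f0; exists [:: (u, v)]; rewrite big_seq1.
by move: fz; rewrite (tp_ext f_lin zero_lin f_pure) => /esym/eqP; rewrite oner_eq0.
Qed.

Lemma slice_bilin (f : {scalar V}) : bilin (fun (u : U) (v : V) => f v *: u).
Proof.
split=> [v|u] a x y; first by rewrite scalerDr scalerA mulrC -scalerA.
by rewrite linearP scalerDl scalerA.
Qed.

Lemma sum_tp_eq0 (s : seq (U * V)) :
  (forall f : {scalar V}, \sum_(p <- s) f p.2 *: p.1 = 0) ->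
  \sum_(p <- s) tp T p.1 p.2 = 0.
Proof.
move def_n : (size s) => n; elim: n s def_n => [|n IHn] [|[x0 y0] s] //=.
  by rewrite big_nil.
move=> [size_s]; have [->|y0_neq0] := eqVneq y0 0 => slices0.
  rewrite big_cons tp0r add0r; apply: IHn => // f.
  by have := slices0 f; rewrite big_cons /= raddf0 scale0r add0r.
have zero_sub : subspace (fun w : V => w = 0) by split=> // a x y -> ->; rewrite scaler0 addr0.
have [f0 [f0y0 _]] := separating_functional zero_sub (elimN eqP y0_neq0).
(* Rewrite the sum as [x0' (x) y0 + sum over s'] with all second legs of [s'] in the kernel
   of [f0]; testing against [f0] then shows [x0' = 0]. *)
pose s' := [seq (p.1, p.2 - f0 p.2 *: y0) | p <- s].
pose x0' := x0 + \sum_(p <- s) f0 p.2 *: p.1.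
have slices_s' (f : {scalar V}) : f y0 *: x0 + \sum_(p <- s) f p.2 *: p.1 =
    f y0 *: x0' + \sum_(p <- s') f p.2 *: p.1.
  rewrite big_map scalerDr scaler_sumr -addrA -big_split /=; congr (_ + _).
  apply: eq_bigr => p _.
  by rewrite linearB scalarZ scalerBl scalerA mulrC -scalerA addrC subrK.
have tensor_s' : tp T x0 y0 + \sum_(p <- s) tp T p.1 p.2 =
    tp T x0' y0 + \sum_(p <- s') tp T p.1 p.2.
  rewrite big_map tpDl tp_suml -addrA -big_split /=; congr (_ + _).
  by apply: eq_bigr => p _; rewrite tpBr tpZr tpZl addrC subrK.
have x0'0 : x0' = 0.
  have := slices0 f0; rewrite big_cons /= slices_s' f0y0 scale1r big_map big1 ?addr0 //.
  by move=> p _; rewrite /= linearB scalarZ f0y0 mulr1 subrr scale0r.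
rewrite big_cons /= tensor_s' x0'0 tp0l add0r; apply: IHn; first by rewrite size_map.
by move=> f; have := slices0 f; rewrite big_cons /= slices_s' x0'0 scaler0 add0r.
Qed.

Lemma tensor_eq0 (z : T) :
  (forall f : {scalar V}, tlift T (fun u v => f v *: u) z = 0) -> z = 0.
Proof.
have [s ->] := tp_span z => slices0; apply: sum_tp_eq0 => f.
have := slices0 f; rewrite (lin_sum (tlift_lin (slice_bilin f))).
by under eq_bigr => p _ do rewrite (tlift_tp T (slice_bilin f)).
Qed.

End TensorSlices.

Section TensorSquare.
Variables (k : fieldType) (A : lmodType k) (mulA : A -> A -> A)
  (A2 : tensor_product A A) (A3 : tensor_product A A2).
Hypothesis mulA_bilin : bilin mulA.
Local Notation t2 := (tp A2).
Local Notation t3 := (tp A3).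
Local Notation m := mulA.

Lemma mulAPl a x y v : m (a *: x + y) v = a *: m x v + m y v.
Proof. exact: mulA_bilin.1. Qed.
Lemma mulAPr a u x y : m u (a *: x + y) = a *: m u x + m u y.
Proof. exact: mulA_bilin.2. Qed.
Lemma mulAZl a x v : m (a *: x) v = a *: m x v.
Proof. exact: (linZ (mulA_bilin.1 v)). Qed.
Lemma mulAZr a u x : m u (a *: x) = a *: m u x.
Proof. exact: (linZ (mulA_bilin.2 u)). Qed.

Definition mtens (x : A2) : A := tlift A2 m x.

Ltac bilin_tac := split=> ? ? ? ?;
  rewrite ?mulAPl ?mulAPr ?tpPl ?tpPr ?scalerDr ?scalerA ?mulrC //.

Lemma lmulL_bilin c : bilin (fun u v => t2 (m c u) v). Proof. by bilin_tac. Qed.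
Lemma rmulL_bilin c : bilin (fun u v => t2 (m u c) v). Proof. by bilin_tac. Qed.
Lemma lmulR_bilin c : bilin (fun u v => t2 u (m c v)). Proof. by bilin_tac. Qed.
Lemma rmulR_bilin c : bilin (fun u v => t2 u (m v c)). Proof. by bilin_tac. Qed.
Lemma flip2_bilin : bilin (fun u v => t2 v u). Proof. by bilin_tac. Qed.
Lemma mul2_bilin a b : bilin (fun c d => t2 (m a c) (m b d)). Proof. by bilin_tac. Qed.

Lemma lmulL_tp c u v : lmulL m c (t2 u v) = t2 (m c u) v.
Proof. exact: (tlift_tp A2 (lmulL_bilin c)). Qed.
Lemma rmulL_tp c u v : rmulL m (t2 u v) c = t2 (m u c) v.
Proof. exact: (tlift_tp A2 (rmulL_bilin c)). Qed.
Lemma lmulR_tp c u v : lmulR m c (t2 u v) = t2 u (m c v).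
Proof. exact: (tlift_tp A2 (lmulR_bilin c)). Qed.
Lemma rmulR_tp c u v : rmulR m (t2 u v) c = t2 u (m v c).
Proof. exact: (tlift_tp A2 (rmulR_bilin c)). Qed.
Lemma flip2_tp u v : flip2 (t2 u v) = t2 v u.
Proof. exact: (tlift_tp A2 flip2_bilin). Qed.
Lemma mtens_tp u v : mtens (t2 u v) = m u v.
Proof. exact: (tlift_tp A2 mulA_bilin). Qed.

Lemma lmulLP c a (x y : A2) : lmulL m c (a *: x + y) = a *: lmulL m c x + lmulL m c y.
Proof. exact: (tlift_lin (lmulL_bilin c)). Qed.
Lemma rmulLP c a (x y : A2) : rmulL m (a *: x + y) c = a *: rmulL m x c + rmulL m y c.
Proof. exact: (tlift_lin (rmulL_bilin c)). Qed.
Lemma lmulRP c a (x y : A2) : lmulR m c (a *: x + y) = a *: lmulR m c x + lmulR m c y.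
Proof. exact: (tlift_lin (lmulR_bilin c)). Qed.
Lemma rmulRP c a (x y : A2) : rmulR m (a *: x + y) c = a *: rmulR m x c + rmulR m y c.
Proof. exact: (tlift_lin (rmulR_bilin c)). Qed.
Lemma flip2P a (x y : A2) : flip2 (a *: x + y) = a *: flip2 x + flip2 y.
Proof. exact: (tlift_lin flip2_bilin). Qed.
Lemma mtensP a (x y : A2) : mtens (a *: x + y) = a *: mtens x + mtens y.
Proof. exact: (tlift_lin mulA_bilin). Qed.

Lemma mul2_left_bilin (y : A2) : bilin (fun a b => tlift A2 (fun c d => t2 (m a c) (m b d)) y).
Proof.
have lift_lin a b := tlift_lin (T := A2) (mul2_bilin a b).
split=> [v|u] al x x'; move: y; apply: tp_ext => [||c d];
  by [exact: lift_lin | exact: lin_add (lin_scale _ (lift_lin _ _)) (lift_lin _ _)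
     | rewrite !(tlift_tp A2 (mul2_bilin _ _)) mulAPl ?tpPl ?tpPr].
Qed.

Lemma mul2_tp a b c d : mul2 m (t2 a b) (t2 c d) = t2 (m a c) (m b d).
Proof. by rewrite /mul2 (tlift_tp A2 (mul2_left_bilin _)) (tlift_tp A2 (mul2_bilin _ _)). Qed.

Lemma mul2_linl (z : A2) : lin (fun x => mul2 m x z).
Proof. exact: (tlift_lin (mul2_left_bilin z)). Qed.

Lemma mul2Pl a (x y z : A2) : mul2 m (a *: x + y) z = a *: mul2 m x z + mul2 m y z.
Proof. exact: mul2_linl. Qed.

Lemma mul2_linr (z : A2) : lin (mul2 m z).
Proof.
move=> a x y; move: z; apply: tp_ext => [||u v]; first exact: mul2_linl.
  exact: lin_add (lin_scale _ (mul2_linl _)) (mul2_linl _).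
rewrite /mul2 !(tlift_tp A2 (mul2_left_bilin _)).
exact: (tlift_lin (mul2_bilin _ _)).
Qed.

Lemma mul2Pr a (x y z : A2) : mul2 m z (a *: x + y) = a *: mul2 m z x + mul2 m z y.
Proof. exact: mul2_linr. Qed.

Section Counits.
Variables (e : A -> k) (e_scalar : scalar e).

Lemma eps_id_bilin : bilin (fun u v : A => e u *: v).
Proof. by split=> ? ? ? ?; rewrite ?e_scalar ?scalerDl ?scalerDr ?scalerA // mulrC. Qed.
Lemma id_eps_bilin : bilin (fun u v : A => e v *: u).
Proof. by split=> ? ? ? ?; rewrite ?e_scalar ?scalerDl ?scalerDr ?scalerA // mulrC. Qed.

Lemma eps_id_tp u v : eps_id e (t2 u v) = e u *: v.
Proof. exact: (tlift_tp A2 eps_id_bilin). Qed.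
Lemma id_eps_tp u v : id_eps e (t2 u v) = e v *: u.
Proof. exact: (tlift_tp A2 id_eps_bilin). Qed.
Lemma eps_idP a (x y : A2) : eps_id e (a *: x + y) = a *: eps_id e x + eps_id e y.
Proof. exact: (tlift_lin eps_id_bilin). Qed.
Lemma id_epsP a (x y : A2) : id_eps e (a *: x + y) = a *: id_eps e x + id_eps e y.
Proof. exact: (tlift_lin id_eps_bilin). Qed.

End Counits.

Lemma tens_r_bilin c : bilin (fun (u v : A) => t3 u (t2 v c)).
Proof. by split=> ? ? ? ?; rewrite ?tpPl ?tpPr. Qed.
Lemma tens_r_tp u v c : tens_r A3 (t2 u v) c = t3 u (t2 v c).
Proof. exact: (tlift_tp A2 (tens_r_bilin c)). Qed.
Lemma tens_rP a x y c : tens_r A3 (a *: x + y) c = a *: tens_r A3 x c + tens_r A3 y c.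
Proof. exact: (tlift_lin (tens_r_bilin c)). Qed.

Section IdTens.
Variables (F : A2 -> A2) (F_lin : lin F).
Lemma id_tens_bilin : bilin (fun (u : A) (y : A2) => t3 u (F y)).
Proof. by split=> ? ? ? ?; rewrite ?tpPl // F_lin tpPr. Qed.
Lemma id_tens_tp u y : id_tens F (t3 u y) = t3 u (F y).
Proof. exact: (tlift_tp A3 id_tens_bilin). Qed.
Lemma id_tensP a (x y : A3) : id_tens F (a *: x + y) = a *: id_tens F x + id_tens F y.
Proof. exact: (tlift_lin id_tens_bilin). Qed.
End IdTens.

Section IdEpsId.
Variables (e : A -> k) (e_scalar : scalar e).
Lemma id_eps_id_bilin : bilin (fun (u : A) (y : A2) => t2 u (eps_id e y)).
Proof. by split=> ? ? ? ?; rewrite ?eps_idP ?tpPl ?tpPr. Qed.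
Lemma id_eps_id_tp u y : id_eps_id e (t3 u y) = t2 u (eps_id e y).
Proof. exact: (tlift_tp A3 id_eps_id_bilin). Qed.
Lemma id_eps_idP a (x y : A3) : id_eps_id e (a *: x + y) = a *: id_eps_id e x + id_eps_id e y.
Proof. exact: (tlift_lin id_eps_id_bilin). Qed.
End IdEpsId.

End TensorSquare.

Ltac expand_linear :=
  do 3 (rewrite ?(mul2Pl, mul2Pr, lmulLP, rmulLP, lmulRP, rmulRP, flip2P, mtensP,
                  eps_idP, id_epsP, tens_rP, id_tensP, id_eps_idP, mulAPl, mulAPr, tpPl, tpPr) //;
        repeat match goal with H : lin ?f |- context [?f (_ *: _ + _)] => rewrite H end).

Ltac linear_goal :=
  let a := fresh "a" in move=> a ? ?; expand_linear;
  try by rewrite ?scalerDr ?scalerA ?(mulrC a) ?scaler0 ?addr0.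

(* reduce an identity between linear functions of [z] to pure tensors [tp _ u v] *)
Ltac tensor_ind z := move: z; apply: tp_ext; [linear_goal | linear_goal |].

Ltac tp_simpl := rewrite ?(mul2_tp, lmulL_tp, rmulL_tp, lmulR_tp, rmulR_tp, flip2_tp,
  mtens_tp, eps_id_tp, id_eps_tp, tens_r_tp, id_eps_id_tp, id_tens_tp) //.

Section TensorSquareAlgebra.
Variables (k : fieldType) (A : lmodType k) (mulA : A -> A -> A)
  (A2 : tensor_product A A).
Hypotheses (mulA_bilin : bilin mulA)
  (mulA_assoc : forall a b c, mulA (mulA a b) c = mulA a (mulA b c)).
Local Notation t2 := (tp A2).
Local Notation m := mulA.
Local Notation mul2 := (mul2 mulA (A2:=A2)).
Local Notation lmulL := (lmulL mulA (A2:=A2)).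
Local Notation rmulL := (rmulL mulA (A2:=A2)).
Local Notation lmulR := (lmulR mulA (A2:=A2)).
Local Notation rmulR := (rmulR mulA (A2:=A2)).
Local Notation flip := (flip2 (A2:=A2)).
Local Notation mtens := (mtens mulA (A2:=A2)).

Lemma mul2A x y z : mul2 (mul2 x y) z = mul2 x (mul2 y z).
Proof.
tensor_ind x => a b; tensor_ind y => c d; tensor_ind z => e f.
by tp_simpl; rewrite !mulA_assoc.
Qed.

Lemma mul2_tpl a b x : mul2 (t2 a b) x = lmulL a (lmulR b x).
Proof. by tensor_ind x => c d; tp_simpl. Qed.

Lemma lmulLR a b x : lmulL a (lmulR b x) = lmulR b (lmulL a x).
Proof. by tensor_ind x => c d; tp_simpl. Qed.

Lemma lmulRM c b x : lmulR (m c b) x = lmulR c (lmulR b x).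
Proof. by tensor_ind x => e f; tp_simpl; rewrite mulA_assoc. Qed.

Lemma mul2_lmulR c y x : mul2 (lmulR c y) x = lmulR c (mul2 y x).
Proof. by tensor_ind y => a b; tensor_ind x => e f; tp_simpl; rewrite mulA_assoc. Qed.

Lemma mul2_rmulL y b x : mul2 (rmulL y b) x = mul2 y (lmulL b x).
Proof. by tensor_ind y => c d; tensor_ind x => e f; tp_simpl; rewrite mulA_assoc. Qed.

Lemma mul2_rmulR y b x : mul2 (rmulR y b) x = mul2 y (lmulR b x).
Proof. by tensor_ind y => c d; tensor_ind x => e f; tp_simpl; rewrite mulA_assoc. Qed.

Lemma flip2K : involutive flip.
Proof. by move=> z; tensor_ind z => a b; tp_simpl. Qed.

Lemma flip2_lmulL c z : flip (lmulL c z) = lmulR c (flip z).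
Proof. by tensor_ind z => a b; tp_simpl. Qed.

Lemma flip2_lmulR c z : flip (lmulR c z) = lmulL c (flip z).
Proof. by tensor_ind z => a b; tp_simpl. Qed.

Lemma mul2_flip2 y x : mul2 (flip y) x = flip (mul2 y (flip x)).
Proof. by tensor_ind y => a b; tensor_ind x => e f; tp_simpl. Qed.

Lemma mtens_lmulL u z : mtens (lmulL u z) = m u (mtens z).
Proof. by tensor_ind z => e f; tp_simpl. Qed.

Section Counit.
Variables (e : A -> k) (e_scalar : scalar e).

Lemma eps_id_lmulR c y : eps_id e (lmulR c y) = m c (eps_id e y).
Proof. by tensor_ind y => a b; tp_simpl; rewrite mulAZr. Qed.

Lemma eps_id_rmulR y b : eps_id e (rmulR y b) = m (eps_id e y) b.
Proof. by tensor_ind y => a c; tp_simpl; rewrite mulAZl. Qed.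

Lemma id_eps_rmulL y b : id_eps e (rmulL y b) = m (id_eps e y) b.
Proof. by tensor_ind y => a c; tp_simpl; rewrite mulAZl. Qed.

Lemma eps_id_flip2 y : eps_id e (flip y) = id_eps e y.
Proof. by tensor_ind y => a b; tp_simpl. Qed.

Lemma eps_id_lmulL (e_mul : forall x y, e (m x y) = e x * e y) u y :
  eps_id e (lmulL u y) = e u *: eps_id e y.
Proof.
by tensor_ind y => a c; tp_simpl; rewrite e_mul scalerA.
Qed.

Lemma id_eps_mul2_tpr z c d : id_eps e (mul2 z (t2 c d)) = m (id_eps e (rmulR z d)) c.
Proof. by tensor_ind z => a b; tp_simpl; rewrite mulAZl. Qed.

Lemma id_eps_mul2_tpl z c d : id_eps e (mul2 (t2 c d) z) = m c (id_eps e (lmulR d z)).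
Proof. by tensor_ind z => a b; tp_simpl; rewrite mulAZr. Qed.

End Counit.

Hypotheses (mulA_ndl : forall a, (forall b, m a b = 0) -> a = 0)
  (mulA_ndr : forall a, (forall b, m b a = 0) -> a = 0).

Lemma mulA_extl a a' : (forall b, m a b = m a' b) -> a = a'.
Proof.
move=> eq_ab; apply/eqP; rewrite -subr_eq0; apply/eqP/mulA_ndl => b.
by rewrite (linB (mulA_bilin.1 b)) eq_ab subrr.
Qed.

Lemma mulA_extr a a' : (forall b, m b a = m b a') -> a = a'.
Proof.
move=> eq_ba; apply/eqP; rewrite -subr_eq0; apply/eqP/mulA_ndr => b.
by rewrite (linB (mulA_bilin.2 b)) eq_ba subrr.
Qed.

Lemma tensor_eq0_l (z : A2) : (forall f : {scalar A}, eps_id f z = 0) -> z = 0.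
Proof.
move=> slices0; rewrite -[z]flip2K (tensor_eq0 (z := flip z)) ?(lin0 (flip2P (A2:=A2))) //.
move=> f; have := slices0 f.
by rewrite -[z in eps_id _ z]flip2K (eps_id_flip2 (linearP f)).
Qed.

Lemma mul2_extl (z z' : A2) : (forall x, mul2 z x = mul2 z' x) -> z = z'.
Proof.
move=> eq_zx; apply/eqP; rewrite -subr_eq0; apply/eqP.
have mul0 x : mul2 (z - z') x = 0 by rewrite (linB (mul2_linl mulA_bilin x)) /= eq_zx subrr.
have rmulR0 d : rmulR (z - z') d = 0.
  apply: tensor_eq0 => f; apply: mulA_ndl => c.
  by rewrite -(id_eps_mul2_tpr (linearP f)) mul0 (lin0 (id_epsP (linearP f))).
apply: tensor_eq0_l => f; apply: mulA_ndl => d.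
by rewrite -(eps_id_rmulR (linearP f)) rmulR0 (lin0 (eps_idP (linearP f))).
Qed.

Lemma mul2_extr (z z' : A2) : (forall x, mul2 x z = mul2 x z') -> z = z'.
Proof.
move=> eq_xz; apply/eqP; rewrite -subr_eq0; apply/eqP.
have mul0 x : mul2 x (z - z') = 0 by rewrite (linB (mul2_linr mulA_bilin x)) eq_xz subrr.
have lmulR0 d : lmulR d (z - z') = 0.
  apply: tensor_eq0 => f; apply: mulA_ndr => c.
  by rewrite -(id_eps_mul2_tpl (linearP f)) mul0 (lin0 (id_epsP (linearP f))).
apply: tensor_eq0_l => f; apply: mulA_ndr => d.
by rewrite -(eps_id_lmulR (linearP f)) lmulR0 (lin0 (eps_idP (linearP f))).
Qed.

End TensorSquareAlgebra.

Section Coquasigroup.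
Variables (k : fieldType) (A : lmodType k) (mulA : A -> A -> A)
  (A2 : tensor_product A A) (A3 : tensor_product A A2).
Hypothesis A_nd : nd_algebra mulA.
Variables (DL DR DLc DRc : A -> A2 -> A2) (eps epsc : A -> k)
  (T1 T2 T1inv T2inv T1c T2c T1cinv T2cinv : A2 -> A2).
Hypothesis HD : is_GMHC mulA A3 DL DR eps T1 T2 T1inv T2inv.
Hypothesis HDc : is_GMHC mulA A3 DLc DRc epsc T1c T2c T1cinv T2cinv.
Hypothesis DLc_flip : forall a y, DLc a y = flip2 (DL a (flip2 y)).

Local Notation t2 := (tp A2).
Local Notation m := mulA.
Local Notation mul2 := (mul2 mulA (A2:=A2)).
Local Notation lmulL := (lmulL mulA (A2:=A2)).
Local Notation rmulL := (rmulL mulA (A2:=A2)).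
Local Notation lmulR := (lmulR mulA (A2:=A2)).
Local Notation rmulR := (rmulR mulA (A2:=A2)).
Local Notation flip := (flip2 (A2:=A2)).
Local Notation mtens := (mtens mulA (A2:=A2)).

Let mulA_bilin : bilin m := A_nd.1.
Let mulA_assoc a b c : m (m a b) c = m a (m b c) := A_nd.2.1 a b c.
Let mulA_ndl a : (forall b, m a b = 0) -> a = 0 := A_nd.2.2.1 a.
Let mulA_ndr a : (forall b, m b a = 0) -> a = 0 := A_nd.2.2.2 a.

Let DL_multiplier a x y : mul2 x (DL a y) = mul2 (DR a x) y := HD.1 a x y.
Let DL_mul a b y : DL (m a b) y = DL a (DL b y) := HD.2.2.2.1 a b y.
Let T1_lin : lin T1 := HD.2.2.2.2.2.1.
Let mul2_T1_tp a b x : mul2 (T1 (t2 a b)) x = DL a (lmulR b x) :=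
  (HD.2.2.2.2.2.2.1 a b x).1.
Let T2_lin : lin T2 := HD.2.2.2.2.2.2.2.1.
Let mul2_T2_tp a b x : mul2 (T2 (t2 a b)) x = lmulL a (DL b x) :=
  (HD.2.2.2.2.2.2.2.2.1 a b x).1.
Let eps_scalar : scalar eps := HD.2.2.2.2.2.2.2.2.2.1.
Let eps_id_T1_tp a b : eps_id eps (T1 (t2 a b)) = m a b :=
  HD.2.2.2.2.2.2.2.2.2.2.1 a b.
Let id_eps_T2_tp a b : id_eps eps (T2 (t2 a b)) = m a b :=
  HD.2.2.2.2.2.2.2.2.2.2.2.1 a b.
Let T1K : cancel T1 T1inv := HD.2.2.2.2.2.2.2.2.2.2.2.2.1.
Let T1invK : cancel T1inv T1 := HD.2.2.2.2.2.2.2.2.2.2.2.2.2.1.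
Let T2K : cancel T2 T2inv := HD.2.2.2.2.2.2.2.2.2.2.2.2.2.2.1.
Let T2invK : cancel T2inv T2 := HD.2.2.2.2.2.2.2.2.2.2.2.2.2.2.2.1.
Let T1inv_covering a b c : lmulL c (T1inv (t2 a b)) =
  id_eps_id eps (id_tens T1inv (tens_r A3 (T2 (t2 c a)) b)) :=
  HD.2.2.2.2.2.2.2.2.2.2.2.2.2.2.2.2.1 a b c.

Let T1c_lin : lin T1c := HDc.2.2.2.2.2.1.
Let mul2_T1c_tp a b x : mul2 (T1c (t2 a b)) x = DLc a (lmulR b x) :=
  (HDc.2.2.2.2.2.2.1 a b x).1.
Let epsc_scalar : scalar epsc := HDc.2.2.2.2.2.2.2.2.2.1.
Let eps_idc_T1c_tp a b : eps_id epsc (T1c (t2 a b)) = m a b :=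
  HDc.2.2.2.2.2.2.2.2.2.2.1 a b.
Let T1cK : cancel T1c T1cinv := HDc.2.2.2.2.2.2.2.2.2.2.2.2.1.
Let T1cinvK : cancel T1cinv T1c := HDc.2.2.2.2.2.2.2.2.2.2.2.2.2.1.

Let T1inv_lin : lin T1inv. Proof. exact: lin_cancel T1_lin T1K T1invK. Qed.
Let T2inv_lin : lin T2inv. Proof. exact: lin_cancel T2_lin T2K T2invK. Qed.

Lemma DL_lin a : lin (DL a).
Proof.
move=> al y y'; apply: (mul2_extr mulA_bilin mulA_ndr) => w.
by rewrite DL_multiplier !mul2Pr // !DL_multiplier.
Qed.

Lemma DL_mul2 u z x : mul2 (DL u z) x = DL u (mul2 z x).
Proof.
apply: (mul2_extr mulA_bilin mulA_ndr) => w.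
by rewrite -mul2A // DL_multiplier !mul2A // DL_multiplier.
Qed.

Lemma T1_lmulL u Y : T1 (lmulL u Y) = DL u (T1 Y).
Proof.
have DLu_lin := DL_lin u; tensor_ind Y => y z; rewrite lmulL_tp //.
by apply: (mul2_extl mulA_bilin mulA_ndl) => x; rewrite mul2_T1_tp DL_mul DL_mul2 mul2_T1_tp.
Qed.

Lemma T1inv_rmulL_tp u w y : T1inv (rmulL (T1 (t2 u w)) y) = lmulL u (T1inv (t2 y w)).
Proof.
apply: (can_inj T1K); rewrite T1_lmulL !T1invK.
apply: (mul2_extl mulA_bilin mulA_ndl) => x.
by rewrite mul2_rmulL // mul2_T1_tp DL_mul2 mul2_tpl // lmulLR.
Qed.

Lemma eps_id_T1 Y : eps_id eps (T1 Y) = mtens Y.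
Proof. by tensor_ind Y => u v; tp_simpl. Qed.

Lemma mtens_T1inv W : mtens (T1inv W) = eps_id eps W.
Proof. by rewrite -eps_id_T1 T1invK. Qed.

Lemma mtens_T1inv_rmulL Z y : mtens (T1inv (rmulL (T1 Z) y)) = eps y *: mtens Z.
Proof.
tensor_ind Z => u w.
rewrite T1inv_rmulL_tp mtens_lmulL // mtens_T1inv eps_id_tp // mtens_tp //.
exact: mulAZr.
Qed.

Lemma lmulR_T1c c a b : lmulR c (T1c (t2 a b)) = flip (rmulL (T2 (t2 c a)) b).
Proof.
apply: (mul2_extl mulA_bilin mulA_ndl) => x.
rewrite mul2_lmulR // mul2_T1c_tp DLc_flip -flip2_lmulL // mul2_flip2 // mul2_rmulL //.
by rewrite mul2_T2_tp flip2_lmulR.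
Qed.

Lemma eps_id_T1c a b : eps_id eps (T1c (t2 a b)) = m a b.
Proof.
apply: (mulA_extr mulA_bilin mulA_ndr) => c.
rewrite -eps_id_lmulR // lmulR_T1c eps_id_flip2 // id_eps_rmulL //.
by rewrite id_eps_T2_tp mulA_assoc.
Qed.

Lemma eps_id_cop (W : A2) : eps_id epsc W = eps_id eps W.
Proof.
by rewrite -(T1cinvK W); tensor_ind (T1cinv W) => u v; rewrite eps_idc_T1c_tp eps_id_T1c.
Qed.

Lemma counit_cop : epsc =1 eps.
Proof.
move=> a; have [[b b_neq0]|A_trivial] := pselect (exists b : A, b != 0); last first.
  by rewrite (eq0_no_nonzero a A_trivial) !scalar0.
have := eps_id_cop (t2 a b); rewrite !eps_id_tp // => /eqP.
by rewrite -subr_eq0 -scalerBl scaler_eq0 (negbTE b_neq0) orbF subr_eq0 => /eqP.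
Qed.

Lemma DL_tp q a b : DL q (t2 a b) = rmulR (flip (T1c (t2 q a))) b.
Proof.
apply: (mul2_extl mulA_bilin mulA_ndl) => x.
rewrite DL_mul2 mul2_tpl // mul2_rmulR // mul2_flip2 // mul2_T1c_tp DLc_flip flip2K //.
by rewrite flip2_lmulR // flip2K.
Qed.

Lemma T1_rmulR Y b : T1 (rmulR Y b) = rmulR (T1 Y) b.
Proof.
tensor_ind Y => y z; apply: (mul2_extl mulA_bilin mulA_ndl) => x.
by rewrite rmulR_tp // mul2_T1_tp mul2_rmulR // mul2_T1_tp lmulRM.
Qed.

Lemma T1inv_rmulR W b : T1inv (rmulR W b) = rmulR (T1inv W) b.
Proof. by rewrite -{1}(T1invK W) -T1_rmulR T1K. Qed.

(* [Smul (a (x) b)] is [S(a) b] *)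
Definition Smul (W : A2) : A := eps_id eps (T1inv W).

Let Smul_lin : lin Smul.
Proof. by move=> a x y; rewrite /Smul T1inv_lin eps_idP. Qed.

Lemma Smul_rmulR W b : Smul (rmulR W b) = m (Smul W) b.
Proof. by rewrite /Smul T1inv_rmulR eps_id_rmulR. Qed.

Section NonTrivial.
Hypothesis A_nontrivial : exists b : A, b != 0.

Lemma eps_mul x y : eps (m x y) = eps x * eps y.
Proof.
have [b b_neq0] := A_nontrivial.
have : eps (m x y) *: b = (eps x * eps y) *: b.
  (* both sides are [mtens (T1^-1 ((x (x) b)(y (x) 1)))] *)
  rewrite -(eps_id_tp A2 eps_scalar) -mtens_T1inv.
  rewrite -[t2 _ b](rmulL_tp _ mulA_bilin) -[t2 x b]T1invK mtens_T1inv_rmulL mtens_T1inv.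
  by rewrite eps_id_tp // scalerA mulrC.
by move/eqP; rewrite -subr_eq0 -scalerBl scaler_eq0 (negbTE b_neq0) orbF subr_eq0 => /eqP.
Qed.

Lemma Smul_rmulL_T1 Z y : Smul (rmulL (T1 Z) y) = Smul (t2 y (eps_id eps Z)).
Proof.
tensor_ind Z => u w.
by rewrite eps_id_tp // tpZr (linZ Smul_lin) /Smul T1inv_rmulL_tp (eps_id_lmulL _ _ eps_mul).
Qed.

Lemma Smul_mul x y b : Smul (t2 (m x y) b) = Smul (t2 y (Smul (t2 x b))).
Proof. by rewrite -[t2 _ b](rmulL_tp _ mulA_bilin) -{1}(T1invK (t2 x b)) Smul_rmulL_T1. Qed.

Lemma Smul_flip2_T1c q a b : m (Smul (flip (T1c (t2 q a)))) b = eps q *: Smul (t2 a b).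
Proof.
rewrite -Smul_rmulR -DL_tp -{1}(T1invK (t2 a b)) -T1_lmulL /Smul T1K.
exact: (eps_id_lmulL mulA_bilin eps_scalar eps_mul).
Qed.

Lemma eps_surj : exists q, eps q = 1.
Proof.
have [b b_neq0] := A_nontrivial.
suff [q eps_q] : exists q, eps q != 0 by exists ((eps q)^-1 *: q); rewrite scalarZl ?mulVf.
(* otherwise every product [a b = (eps (x) iota) T1 (a (x) b)] would vanish *)
apply: contrapT => eps0; case/negP: b_neq0; apply/eqP/mulA_ndr => a.
rewrite -eps_id_T1_tp; tensor_ind (T1 (t2 a b)) => u v.
rewrite eps_id_tp //; case: (eqVneq (eps u) 0) => [->|eps_u]; first exact: scale0r.
by case: eps0; exists u.
Qed.

Lemma antipode_in_A : exists S : A -> A, forall a b, m (S a) b = Smul (t2 a b).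
Proof.
have [q eps_q] := eps_surj.
by exists (fun a => Smul (flip (T1c (t2 q a)))) => a b; rewrite Smul_flip2_T1c eps_q scale1r.
Qed.

Section Antipode.
Variables (S : A -> A) (HS : forall a b, m (S a) b = Smul (t2 a b)).

Lemma antipode_lin : lin S.
Proof.
move=> al x y; apply: (mulA_extl mulA_bilin mulA_ndl) => b.
by rewrite mulAPl // !HS tpPl Smul_lin.
Qed.

Lemma antipode_anti x y : S (m x y) = m (S y) (S x).
Proof. by apply: (mulA_extl mulA_bilin mulA_ndl) => b; rewrite HS Smul_mul mulA_assoc !HS. Qed.

Let mul_idS_bilin : bilin (fun u v => m u (S v)).
Proof. by split=> ? ? ? ?; rewrite ?mulAPl ?antipode_lin ?mulAPr. Qed.

Definition mul_idS (W : A2) : A := tlift A2 (fun u v => m u (S v)) W.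

Let mul_idS_lin : lin mul_idS. Proof. exact: (tlift_lin mul_idS_bilin). Qed.

Lemma mul_idS_tp u v : mul_idS (t2 u v) = m u (S v).
Proof. exact: (tlift_tp A2 mul_idS_bilin). Qed.

Lemma mul_idS_mulA W d :
  m (mul_idS W) d = mtens (id_eps_id eps (id_tens T1inv (tens_r A3 W d))).
Proof. by tensor_ind W => u v; rewrite mul_idS_tp; tp_simpl; rewrite mulA_assoc HS. Qed.

Lemma mul_idS_T2 Y : mul_idS (T2 Y) = id_eps eps Y.
Proof.
tensor_ind Y => c a; apply: (mulA_extl mulA_bilin mulA_ndl) => d.
rewrite mul_idS_mulA -T1inv_covering mtens_lmulL // mtens_T1inv.
by rewrite eps_id_tp // id_eps_tp // (mulAZr mulA_bilin) (mulAZl mulA_bilin).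
Qed.

Lemma mul_antipode_T2inv c y : m c (S y) = id_eps eps (T2inv (t2 c y)).
Proof. by rewrite -mul_idS_T2 T2invK mul_idS_tp. Qed.

Lemma antipode_mul_extr v v' :
  (forall c u, m (m c (S u)) v = m (m c (S u)) v') -> v = v'.
Proof.
move=> eq_v; have [q eps_q] := eps_surj; apply: (mulA_extr mulA_bilin mulA_ndr) => x.
have -> : x = id_eps eps (T2inv (T2 (t2 x q))) by rewrite T2K id_eps_tp // eps_q scale1r.
by tensor_ind (T2 (t2 x q)) => c u; rewrite -mul_antipode_T2inv.
Qed.

Variables (Sc : A -> A) (HSc : forall a b, m (Sc a) b = eps_id epsc (T1cinv (t2 a b))).

Lemma antipode_cop_Smul W : S (eps_id epsc (T1cinv W)) = Smul (flip W).
Proof.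
have S_lin := antipode_lin; rewrite -(T1cinvK W) T1cK; tensor_ind (T1cinv W) => x b.
rewrite eps_id_tp // (linZ S_lin) counit_cop.
apply: (mulA_extl mulA_bilin mulA_ndl) => c.
by rewrite Smul_flip2_T1c (mulAZl mulA_bilin) HS.
Qed.

Lemma antipode_copK : cancel Sc S.
Proof.
move=> v; apply: antipode_mul_extr => c u; rewrite !mulA_assoc; congr (m c _).
by rewrite -antipode_anti HSc antipode_cop_Smul flip2_tp -HS.
Qed.

End Antipode.
End NonTrivial.
End Coquasigroup.

Theorem proposition3p1 (k : fieldType) (A : lmodType k) (mulA : A -> A -> A)
  (A2 : tensor_product A A) (A3 : tensor_product A A2)
  (DL DR : A -> A2 -> A2) (eps epsc : A -> k)
  (T1 T2 T1inv T2inv T1c T2c T1cinv T2cinv : A2 -> A2) :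
  nd_algebra mulA ->
  is_GMHC mulA A3 DL DR eps T1 T2 T1inv T2inv ->
  (* regularity: (A, Delta^cop) is again a GMHC, with counit epsc *)
  is_GMHC mulA A3 (fun a y => flip2 (DL a (flip2 y)))
                  (fun a y => flip2 (DR a (flip2 y))) epsc T1c T2c T1cinv T2cinv ->
  (* (1) eps^cop = eps *)
  epsc =1 eps /\
  (* (2) S(A) in A, S^cop(A) in A, and S^cop = S^-1 *)
  exists S Scop : A -> A,
    (forall a b, mulA (S a) b = eps_id eps (T1inv (tp A2 a b))) /\
    (forall a b, mulA (Scop a) b = eps_id epsc (T1cinv (tp A2 a b))) /\
    cancel S Scop /\ cancel Scop S.
Proof.
move=> A_nd HD HDc.
have DL_flip a y : DL a y = flip2 (flip2 (DL a (flip2 (flip2 y)))) by rewrite !flip2K.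
split; first exact: (counit_cop A_nd HD HDc (fun _ _ => erefl)).
have [A_nontrivial|A_trivial] := pselect (exists b : A, b != 0); last first.
  have A0 (a : A) : a = 0 := eq0_no_nonzero a A_trivial.
  by exists id, id; do !split=> // *; rewrite [LHS]A0 [RHS]A0.
have [S HS] := antipode_in_A A_nd HD HDc (fun _ _ => erefl) A_nontrivial.
have [Sc HSc] := antipode_in_A A_nd HDc HD DL_flip A_nontrivial.
exists S, Sc; do !split=> //.
- exact: (antipode_copK A_nd HDc HD DL_flip A_nontrivial HSc HS).
- exact: (antipode_copK A_nd HD HDc (fun _ _ => erefl) A_nontrivial HS HSc).
Qed.
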